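(* For a Banach algebra $A$ the following are equivalent: (i) $A$ is approximately semi-contractible; (ii) $A$ is approximately semi-amenable; (iii) $A$ is weak$^*$-approximately semi-amenable.
   Context: For a Banach algebra $A$ and Banach $A$-bimodule $X$, a derivation is a linear map $D$ from $A$ into a bimodule with $D(ab)=a\cdot D(b)+D(a)\cdot b$; $X^*$ is a Banach $A$-bimodule via $\langle a\cdot f,x\rangle=\langle f,x\cdot a\rangle$, $\langle f\cdot a,x\rangle=\langle f,a\cdot x\rangle$. A continuous derivation $D:A\to Y$ ($Y$ a Banach $A$-bimodule) is approximately semi-inner if there are nets $(\xi_i),(\eta_i)$ in $Y$ with $D(a)=\lim_i(a\cdot\xi_i-\eta_i\cdot a)$ in norm for every $a\in A$. $A$ is approximately semi-contractible if for every Banach $A$-bimodule $X$ every continuous derivation $A\to X$ is approximately semi-inner; approximately semi-amenable if for every $X$ every continuous derivation $A\to X^*$ is approximately semi-inner; weak$^*$-approximately semi-amenable if for every $X$ and every continuous derivation $D:A\to X^*$ there are nets $(f_i),(g_i)$ in $X^*$ with $a\cdot f_i-g_i\cdot a\to D(a)$ weak$^*$ for every $a\in A$. *)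

From mathcomp Require Import all_boot all_algebra.
From mathcomp Require Import all_classical all_reals all_analysis.
Import GRing.Theory Num.Theory.
Import numFieldNormedType.Exports.
From mathcomp Require Export complex.

Set Implicit Arguments.
Unset Strict Implicit.
Unset Printing Implicit Defensive.

Local Open Scope ring_scope.

Definition directed_set (I : Type) (le : I -> I -> Prop) : Prop :=
  [/\ inhabited I, (forall i, le i i),
      (forall i j k, le i j -> le j k -> le i k) &
      (forall i j, exists k, le i k /\ le j k)].

Section BanachDefs.
Variable R : realType.
Local Notation K := (R[i]).

Record banach_algebra (A : completeNormedModType K) := BanachAlgebra {
  amul : A -> A -> A;
  amulDl : forall a b c, amul (a + b) c = amul a c + amul b c;
  amulDr : forall a b c, amul a (b + c) = amul a b + amul a c;
  amulZl : forall (k : K) a b, amul (k *: a) b = k *: amul a b;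
  amulZr : forall (k : K) a b, amul a (k *: b) = k *: amul a b;
  amulA : forall a b c, amul a (amul b c) = amul (amul a b) c;
  amul_norm : forall a b, `|amul a b| <= `|a| * `|b| }.

Record banach_bimodule (A : completeNormedModType K) (BA : banach_algebra A)
    (X : completeNormedModType K) := BanachBimodule {
  lact : A -> X -> X;
  ract : X -> A -> X;
  lactDl : forall a b x, lact (a + b) x = lact a x + lact b x;
  lactDr : forall a x y, lact a (x + y) = lact a x + lact a y;
  lactZl : forall (k : K) a x, lact (k *: a) x = k *: lact a x;
  lactZr : forall (k : K) a x, lact a (k *: x) = k *: lact a x;
  ractDl : forall x y a, ract (x + y) a = ract x a + ract y a;
  ractDr : forall x a b, ract x (a + b) = ract x a + ract x b;
  ractZl : forall (k : K) x a, ract (k *: x) a = k *: ract x a;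
  ractZr : forall (k : K) x a, ract x (k *: a) = k *: ract x a;
  lactA : forall a b x, lact (amul BA a b) x = lact a (lact b x);
  ractA : forall x a b, ract x (amul BA a b) = ract (ract x a) b;
  lractA : forall a x b, ract (lact a x) b = lact a (ract x b);
  lact_bounded : exists C : K, forall a x, `|lact a x| <= C * `|a| * `|x|;
  ract_bounded : exists C : K, forall x a, `|ract x a| <= C * `|x| * `|a| }.

Variables (A : completeNormedModType K) (BA : banach_algebra A).

Definition net_norm_cvg (I : Type) (le : I -> I -> Prop)
    (V : normedModType K) (u : I -> V) (l : V) : Prop :=
  forall e : K, 0 < e -> exists i0, forall i, le i0 i -> `|u i - l| < e.

Definition derivation (X : completeNormedModType K)
    (M : banach_bimodule BA X) (D : A -> X) : Prop :=
  [/\ (forall a b, D (a + b) = D a + D b),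
      (forall (k : K) a, D (k *: a) = k *: D a) &
      (forall a b, D (amul BA a b) = lact M a (D b) + ract M (D a) b)].

Definition approx_semi_inner (X : completeNormedModType K)
    (M : banach_bimodule BA X) (D : A -> X) : Prop :=
  exists (I : Type) (le : I -> I -> Prop) (xi eta : I -> X),
    directed_set le /\
    forall a, net_norm_cvg le (fun i => lact M a (xi i) - ract M (eta i) a) (D a).

(** ---- The dual bimodule X^star, written out on functions X -> K. ---- *)

Definition dual_elem (X : completeNormedModType K) (f : X -> K) : Prop :=
  [/\ (forall x y, f (x + y) = f x + f y),
      (forall (k : K) x, f (k *: x) = k * f x) &
      continuous (f : X -> K^o)].

Definition dlact (X : completeNormedModType K) (M : banach_bimodule BA X)
    (a : A) (f : X -> K) : X -> K := fun x => f (ract M x a).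
Definition dract (X : completeNormedModType K) (M : banach_bimodule BA X)
    (f : X -> K) (a : A) : X -> K := fun x => f (lact M a x).

Definition dual_norm_le (X : completeNormedModType K) (f : X -> K) (e : K) : Prop :=
  forall x, `|f x| <= e * `|x|.

Definition dual_derivation (X : completeNormedModType K)
    (M : banach_bimodule BA X) (D : A -> X -> K) : Prop :=
  [/\ (forall a, dual_elem (D a)),
      (forall a b x, D (a + b) x = D a x + D b x),
      (forall (k : K) a x, D (k *: a) x = k * D a x) &
      (forall a b x, D (amul BA a b) x = dlact M a (D b) x + dract M (D a) b x)].

Definition dual_continuous (X : completeNormedModType K) (D : A -> X -> K) : Prop :=
  forall a, forall e : K, 0 < e -> exists2 d : K, 0 < d &
    forall b, `|b - a| < d -> dual_norm_le (fun x => D b x - D a x) e.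

Definition dual_approx_semi_inner (X : completeNormedModType K)
    (M : banach_bimodule BA X) (D : A -> X -> K) : Prop :=
  exists (I : Type) (le : I -> I -> Prop) (f g : I -> X -> K),
    [/\ directed_set le, (forall i, dual_elem (f i) /\ dual_elem (g i)) &
    forall a (e : K), 0 < e -> exists i0, forall i, le i0 i ->
      dual_norm_le (fun x => (dlact M a (f i) x - dract M (g i) a x) - D a x) e].

Definition dual_wstar_approx_semi_inner (X : completeNormedModType K)
    (M : banach_bimodule BA X) (D : A -> X -> K) : Prop :=
  exists (I : Type) (le : I -> I -> Prop) (f g : I -> X -> K),
    [/\ directed_set le, (forall i, dual_elem (f i) /\ dual_elem (g i)) &
    forall a x (e : K), 0 < e -> exists i0, forall i, le i0 i ->
      `|(dlact M a (f i) x - dract M (g i) a x) - D a x| < e].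

Definition approx_semi_contractible : Prop :=
  forall (X : completeNormedModType K) (M : banach_bimodule BA X) (D : A -> X),
    derivation M D -> continuous D -> approx_semi_inner M D.

Definition approx_semi_amenable : Prop :=
  forall (X : completeNormedModType K) (M : banach_bimodule BA X) (D : A -> X -> K),
    dual_derivation M D -> dual_continuous D -> dual_approx_semi_inner M D.

Definition wstar_approx_semi_amenable : Prop :=
  forall (X : completeNormedModType K) (M : banach_bimodule BA X) (D : A -> X -> K),
    dual_derivation M D -> dual_continuous D -> dual_wstar_approx_semi_inner M D.

End BanachDefs.

From HB Require Import structures.
From mathcomp Require Import all_boot all_order all_algebra.
From mathcomp Require Import all_classical all_reals all_analysis.
From mathcomp Require Import complex.
From mathcomp Require Import ring lra.
Set Implicit Arguments.
Unset Strict Implicit.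
Unset Printing Implicit Defensive.
Import Order.TTheory GRing.Theory Num.Theory.
Import numFieldNormedType.Exports.
Local Open Scope ring_scope.
Local Open Scope classical_set_scope.
Local Open Scope complex_scope.

(* (i) => (ii): the dual X^* of a Banach A-bimodule X, with the operator norm,
   is again a Banach A-bimodule, and norm convergence in X^* is convergence
   in the sense of [dual_approx_semi_inner].  (ii) => (iii): norm convergence
   implies weak* convergence.
   (iii) => (i): composed with the canonical embedding X -> X^**, a
   derivation D : A -> X becomes a derivation into X^**, the dual of the
   bimodule X^*.
   Weak* approximation of it by a.f_i - g_i.a shows that every finite family
   of functionals phi_k with sum_k phi_k.a_k = 0 and sum_k a_k.phi_k = 0 also
   satisfies sum_k phi_k(D a_k) = 0.  By the Hahn-Banach theorem in X^n with
   the l1-norm, this puts (D a_k)_k in the closure of the tuples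
   (a_k.xi - eta.a_k)_k, i.e. D is approximately semi-inner. *)

(** * Real-valued norms *)

Section RealNorm.
Variable R : realType.
Local Notation K := R[i].

Lemma ge0_complexE (z : K) : 0 <= z -> z = (complex.Re z)%:C.
Proof. by move=> z0; rewrite RRe_real // ger0_real. Qed.

Lemma gt0_complexP (z : K) : 0 < z -> exists2 r : R, 0 < r & z = r%:C.
Proof.
move=> z0; exists (complex.Re z); last exact/ge0_complexE/ltW.
by rewrite -ltcR -ge0_complexE // ltW.
Qed.

Lemma complexD (a b : R) : (a + b)%:C = a%:C + b%:C :> K.
Proof. exact: rmorphD. Qed.

Lemma complexM (a b : R) : (a * b)%:C = a%:C * b%:C :> K.
Proof. exact: rmorphM. Qed.

(* Norms over K = R[i] are K-valued; suprema and sublinear functionals need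
   them as real numbers. *)
Definition rnorm {V : normedZmodType K} (x : V) : R := complex.Re `|x|.

Lemma rnormE {V : normedZmodType K} (x : V) : `|x| = (rnorm x)%:C.
Proof. exact/ge0_complexE/normr_ge0. Qed.

Lemma rnorm_ge0 {V : normedZmodType K} (x : V) : 0 <= rnorm x.
Proof. by rewrite -lecR -rnormE normr_ge0. Qed.

Lemma ler_rnormD {V : normedZmodType K} (x y : V) :
  rnorm (x + y) <= rnorm x + rnorm y.
Proof. by rewrite -lecR complexD -!rnormE ler_normD. Qed.

Lemma rnormN {V : normedZmodType K} (x : V) : rnorm (- x) = rnorm x.
Proof. by rewrite /rnorm normrN. Qed.

Lemma rnorm_distC {V : normedZmodType K} (x y : V) : rnorm (x - y) = rnorm (y - x).
Proof. by rewrite /rnorm distrC. Qed.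

Lemma rnorm0 {V : normedZmodType K} : rnorm (0 : V) = 0.
Proof. by rewrite /rnorm normr0. Qed.

Lemma rnorm0_eq0 {V : normedZmodType K} (x : V) : rnorm x = 0 -> x = 0.
Proof. by move=> x0; apply/normr0_eq0; rewrite rnormE x0. Qed.

Lemma rnorm_gt0 {V : normedZmodType K} (x : V) : x != 0 -> 0 < rnorm x.
Proof.
move=> x0; rewrite lt_neqAle rnorm_ge0 andbT eq_sym.
by apply: contra x0 => /eqP/rnorm0_eq0 ->.
Qed.

Lemma rnormZ {V : normedModType K} (k : K) (x : V) :
  rnorm (k *: x) = rnorm k * rnorm x.
Proof. by apply: complexI; rewrite complexM -!rnormE normrZ. Qed.

Lemma rnormM (k l : K) : rnorm (k * l) = rnorm k * rnorm l.
Proof. by apply: complexI; rewrite complexM -!rnormE normrM. Qed.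

Lemma rnormC (r : R) : rnorm r%:C = `|r|.
Proof.
by apply: complexI; rewrite -rnormE normc_def /= expr0n addr0 sqrtr_sqr.
Qed.

Lemma rnorm1 : rnorm (1 : K) = 1.
Proof. by rewrite -[1 : K]/(1%:C) rnormC normr1. Qed.

Lemma rnorm_i : rnorm ('i : K) = 1.
Proof. by apply: complexI; rewrite -rnormE normc_def /= expr0n expr1n add0r sqrtr1. Qed.

Lemma ler_Re_rnorm (z : K) : `|complex.Re z| <= rnorm z.
Proof. by rewrite -lecR -rnormE normc_ge_Re. Qed.

Lemma ler_Im_rnorm (z : K) : `|complex.Im z| <= rnorm z.
Proof.
by rewrite -[rnorm z]mulr1 -rnorm_i -rnormM -normrN -ReiNIm ler_Re_rnorm.
Qed.

Lemma rnorm_le_ReIm (z : K) : rnorm z <= `|complex.Re z| + `|complex.Im z|.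
Proof.
rewrite {1}[z]complexE; apply: le_trans (ler_rnormD _ _) _.
by rewrite rnormM rnorm_i mul1r !rnormC.
Qed.

Lemma ler_rnorm_sum {V : normedZmodType K} (I : Type) (r : seq I) (P : pred I)
    (F : I -> V) :
  rnorm (\sum_(i <- r | P i) F i) <= \sum_(i <- r | P i) rnorm (F i).
Proof.
elim/big_ind2: _ => [|x1 x2 y1 y2 le1 le2|//]; first by rewrite rnorm0.
exact: le_trans (ler_rnormD _ _) (lerD le1 le2).
Qed.

Lemma complex_complete (F : set_system K^o) : ProperFilter F -> cauchy F -> cvg F.
Proof.
move=> FF /cauchyP Fc.
have lipschitz_cvg (h : K -> R) :
    (forall y z, `|h y - h z| <= rnorm (y - z)) -> cvg (h @ F).
  move=> hlip; apply: R_complete; apply/cauchyP => e e0.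
  have /Fc[x Fx] : 0 < e%:C :> K by rewrite ltcR.
  exists (h x); apply: (@filterS _ F _ (ball x e%:C)) Fx => y.
  rewrite /ball /= rnormE ltcR.
  exact: le_lt_trans.
have cRe : cvg (@complex.Re R @ F).
  by apply: lipschitz_cvg => y z; rewrite -raddfB ler_Re_rnorm.
have cIm : cvg (@complex.Im R @ F).
  by apply: lipschitz_cvg => y z; rewrite -raddfB ler_Im_rnorm.
apply/cvg_ex; exists (lim (@complex.Re R @ F) +i* lim (@complex.Im R @ F)).
apply/cvgrPdist_lt => _ /gt0_complexP[e e0 ->].
have e2 : 0 < e / 2 by rewrite divr_gt0.
near=> z; rewrite rnormE ltcR; apply: le_lt_trans (rnorm_le_ReIm _) _.
rewrite [e]splitr raddfB [complex.Im _]raddfB /=.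
apply: ltrD; near: z; exact: (cvgrPdist_lt _ _).1 _ _ e2.
Unshelve. all: by end_near.
Qed.

End RealNorm.

(** * The Hahn-Banach theorem *)

Section HahnBanach.
Variable R : realType.
Local Notation K := R[i].
Variables (V : lmodType K) (p : V -> R).
Hypothesis p_subadd : forall u v, p (u + v) <= p u + p v.
Hypothesis p_homog : forall (t : R) v, 0 <= t -> p (t%:C *: v) = t * p v.

Definition linear_graph (G : set (V * R)) :=
  (forall v1 r1 v2 r2, G (v1, r1) -> G (v2, r2) -> G (v1 + v2, r1 + r2)) /\
  (forall v r (t : R), G (v, r) -> G (t%:C *: v, t * r)).

Definition dominated_graph (G : set (V * R)) := forall v r, G (v, r) -> r <= p v.

Definition graph_ext (G : set (V * R)) (x0 : V) (c : R) : set (V * R) :=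
  [set vr | exists v r (t : R), G (v, r) /\ vr = (v + t%:C *: x0, r + t * c)].

Lemma sublinear0 : p 0 = 0.
Proof. by rewrite -(scale0r (0 : V)) -[0 : K]/((0 : R)%:C) p_homog // mul0r. Qed.

(* Both (0, r - r') and (0, r' - r) lie in G, and p 0 = 0. *)
Lemma dominated_graph_functional G v r r' : linear_graph G -> dominated_graph G ->
  G (v, r) -> G (v, r') -> r = r'.
Proof.
move=> [Gadd Gscale] Gdom Gr Gr'.
have /Gdom := Gadd _ _ _ _ Gr (Gscale _ _ (-1) Gr').
have /Gdom := Gadd _ _ _ _ Gr' (Gscale _ _ (-1) Gr).
rewrite rmorphN1 !scaleN1r !subrr sublinear0 !mulN1r !subr_le0 => le_rr' le_r'r.
by apply/eqP; rewrite eq_le le_rr' le_r'r.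
Qed.

Lemma linear_graph_ext G x0 c : linear_graph G -> linear_graph (graph_ext G x0 c).
Proof.
move=> [Gadd Gscale]; split.
- move=> _ _ _ _ [v1 [r1 [t1 [G1 [-> ->]]]]] [v2 [r2 [t2 [G2 [-> ->]]]]].
  exists (v1 + v2), (r1 + r2), (t1 + t2); split; first exact: Gadd.
  by rewrite complexD scalerDl mulrDl addrACA [r1 + _ + _]addrACA.
- move=> _ _ t [v [r [u [Gv [-> ->]]]]].
  exists (t%:C *: v), (t * r), (t * u); split; first exact: Gscale.
  by rewrite scalerDr scalerA -complexM mulrDr mulrA.
Qed.

Lemma dominated_graph_ext G x0 c : linear_graph G -> dominated_graph G ->
  (forall v r, G (v, r) -> r - p (v - x0) <= c) ->
  (forall v r, G (v, r) -> c <= p (v + x0) - r) ->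
  dominated_graph (graph_ext G x0 c).
Proof.
move=> [_ Gscale] Gdom c_lb c_ub _ _ [v [r [t [Gv [-> ->]]]]].
have [t0|t0|->] := ltgtP t 0; last by rewrite scale0r mul0r !addr0; exact: Gdom.
- have := c_lb _ _ (Gscale _ _ (- t)^-1 Gv).
  have -> : (- t)^-1%:C *: v - x0 = (- t)^-1%:C *: (v + t%:C *: x0).
    rewrite scalerDr scalerA -complexM invrN mulNr mulVf ?lt_eqF //.
    by rewrite rmorphN1 scaleN1r.
  have Nt0 : 0 < - t by rewrite oppr_gt0.
  rewrite p_homog ?invr_ge0 ?(ltW Nt0) // -mulrBr => /(ler_wpM2l (ltW Nt0)).
  rewrite mulrA mulfV ?gt_eqF // mul1r; lra.
- have := c_ub _ _ (Gscale _ _ t^-1 Gv).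
  have -> : t^-1%:C *: v + x0 = t^-1%:C *: (v + t%:C *: x0).
    by rewrite scalerDr scalerA -complexM mulVf ?gt_eqF // scale1r.
  rewrite p_homog ?invr_ge0 ?(ltW t0) // -mulrBr => /(ler_wpM2l (ltW t0)).
  rewrite mulrA mulfV ?gt_eqF // mul1r; lra.
Qed.

Lemma dominated_graph_ext_exists G x0 : linear_graph G -> dominated_graph G ->
  G (0, 0) -> exists c, dominated_graph (graph_ext G x0 c).
Proof.
move=> Glin Gdom G00.
pose S := [set y | exists v r, G (v, r) /\ y = r - p (v - x0)].
have S_ub v r : G (v, r) -> ubound S (p (v + x0) - r).
  move=> Gvr _ [v' [r' [Gv' ->]]].
  have := Gdom _ _ (Glin.1 _ _ _ _ Gvr Gv').
  have := p_subadd (v + x0) (v' - x0).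
  rewrite addrACA subrr addr0; lra.
have S_neq0 : S !=set0 by exists (0 - p (0 - x0)), 0, 0.
have S_sup : has_sup S by split => //; exists (p (0 + x0) - 0); exact: S_ub.
exists (sup S); apply: dominated_graph_ext => // v r Gvr.
- by apply: sup_upper_bound => //; exists v, r.
- by apply: ge_sup => //; exact: S_ub.
Qed.

(* Candidates for Zorn's lemma: the side condition [G !=set0 -> G0 `<=` G]
   lets the empty graph in, so that the empty chain has an upper bound. *)
Definition hb_candidate (G0 G : set (V * R)) :=
  [/\ linear_graph G, dominated_graph G & G !=set0 -> G0 `<=` G].

Lemma bigcup_hb_candidate G0 (F : set (set (V * R))) :
  F `<=` hb_candidate G0 -> total_on F subset ->
  hb_candidate G0 (\bigcup_(G in F) G).
Proof.
move=> Fc Ftot; split; first split.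
- move=> v1 r1 v2 r2 [G1 FG1 G1v] [G2 FG2 G2v].
  have [[G1add _] _ _] := Fc _ FG1; have [[G2add _] _ _] := Fc _ FG2.
  have [G12|G21] := Ftot _ _ FG1 FG2.
  + by exists G2 => //; apply: G2add => //; exact: G12.
  + by exists G1 => //; apply: G1add => //; exact: G21.
- move=> v r t [G FG Gv]; exists G => //.
  by have [[_ Gscale] _ _] := Fc _ FG; exact: Gscale.
- by move=> v r [G FG Gv]; have [_ Gdom _] := Fc _ FG; exact: Gdom.
- move=> [x [G FG Gx]] y G0y; exists G => //.
  by have [_ _ GG0] := Fc _ FG; apply: GG0 => //; exists x.
Qed.

Theorem hahn_banach_graph G0 : linear_graph G0 -> dominated_graph G0 -> G0 (0, 0) ->
  exists G, [/\ G0 `<=` G, linear_graph G, dominated_graph G &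
                forall v, exists r, G (v, r)].
Proof.
move=> G0lin G0dom G00.
have [G [[Glin Gdom GG0] Gmax]] := Zorn_bigcup (@bigcup_hb_candidate G0).
have G0G : G0 `<=` G.
  apply: GG0; apply/set0P/negP => /eqP G_eq0.
  apply: (Gmax G0); last by split => // _.
  by rewrite G_eq0; split => // /(_ _ G00).
exists G; split => // x0; apply/not_existsP => x0_notin.
have [c Gcdom] := dominated_graph_ext_exists x0 Glin Gdom (G0G _ G00).
apply: (Gmax (graph_ext G x0 c)).
  split => [[v r] Gvr|GcG]; first by exists v, r, 0; rewrite scale0r mul0r !addr0.
  apply: (x0_notin c); apply: GcG; exists 0, 0, 1; split; first exact: G0G.
  by rewrite scale1r mul1r !add0r.
split => //; first exact: linear_graph_ext.
move=> _ [v r] G0vr; exists v, r, 0; split; first exact: G0G.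
by rewrite scale0r mul0r !addr0.
Qed.

Theorem hahn_banach G0 : linear_graph G0 -> dominated_graph G0 -> G0 (0, 0) ->
  exists f : V -> R, [/\ forall u v, f (u + v) = f u + f v,
    forall (t : R) v, f (t%:C *: v) = t * f v,
    forall v, f v <= p v & forall v r, G0 (v, r) -> f v = r].
Proof.
move=> G0lin G0dom G00.
have [G [G0G Glin Gdom Gtot]] := hahn_banach_graph G0lin G0dom G00.
pose f v := projT1 (cid (Gtot v)).
have Gf v : G (v, f v) := projT2 (cid (Gtot v)).
have f_graph v r : G (v, r) -> f v = r.
  exact: dominated_graph_functional Glin Gdom (Gf v).
exists f; split => [u v|t v|v|v r /G0G]; last exact: f_graph.
- by apply: f_graph; exact: Glin.1 _ _ _ _ (Gf u) (Gf v).
- by apply: f_graph; exact: Glin.2 _ _ t (Gf v).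
- exact: Gdom (Gf v).
Qed.

End HahnBanach.

Section Complexification.
Variable R : realType.
Local Notation K := R[i].
Variables (V : lmodType K) (f : V -> R).
Hypothesis fD : forall u v, f (u + v) = f u + f v.
Hypothesis fZ : forall (t : R) v, f (t%:C *: v) = t * f v.

Definition complexify (v : V) : K := (f v)%:C - 'i * (f ('i *: v))%:C.

Lemma complexifyD u v : complexify (u + v) = complexify u + complexify v.
Proof. by rewrite /complexify scalerDr !fD !complexD mulrDr opprD addrACA. Qed.

Lemma complexifyZ (c : K) v : complexify (c *: v) = c * complexify v.
Proof.
rewrite /complexify; case: c => a b.
have scale_ReIm (x y : R) (w : V) : (x +i* y) *: w = x%:C *: w + y%:C *: ('i *: w).
  by rewrite scalerA -scalerDl; congr (_ *: _); apply/eqP; rewrite eq_complex /=; simpc.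
have -> : 'i *: ((a +i* b) *: v) = (- b +i* a) *: v.
  by rewrite scalerA; congr (_ *: _); apply/eqP; rewrite eq_complex /=; simpc.
rewrite (scale_ReIm a b) (scale_ReIm (- b) a) !fD !fZ.
by apply/eqP; rewrite eq_complex /=; simpc; rewrite [- _ + _]addrC eqxx.
Qed.

Lemma Re_complexify v : complex.Re (complexify v) = f v.
Proof. by rewrite /complexify /=; simpc. Qed.

Lemma rnorm_complexify v : rnorm (complexify v) <= `|f v| + `|f ('i *: v)|.
Proof.
by apply: le_trans (ler_rnormD _ _) _; rewrite rnormN rnormM rnorm_i mul1r !rnormC.
Qed.

End Complexification.

Section Separation.
Variable R : realType.
Local Notation K := R[i].
Variables (V : lmodType K) (p : V -> R).
Hypothesis p_subadd : forall u v, p (u + v) <= p u + p v.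
Hypothesis p_scale : forall (c : K) v, p (c *: v) = rnorm c * p v.

Lemma seminormN v : p (- v) = p v.
Proof.
by rewrite -scaleN1r p_scale rnormN rnorm1 mul1r.
Qed.

Lemma seminorm_ge0 v : 0 <= p v.
Proof.
have := p_subadd v (- v); rewrite subrr seminormN.
have -> : p 0 = 0 by rewrite -(scale0r 0) p_scale rnorm0 mul0r.
lra.
Qed.

Theorem seminorm_separation (W : set V) (y : V) (e : R) : 0 <= e -> W 0 ->
  (forall u v, W u -> W v -> W (u + v)) -> (forall (c : K) u, W u -> W (c *: u)) ->
  (forall w, W w -> e <= p (w + y)) ->
  exists g : V -> K, [/\ forall u v, g (u + v) = g u + g v,
    forall (c : K) v, g (c *: v) = c * g v, forall v, rnorm (g v) <= 2 * p v,
    forall w, W w -> g w = 0 & complex.Re (g y) = e].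
Proof.
move=> e0 W0 WD WZ W_far.
have p_homog (t : R) v : 0 <= t -> p (t%:C *: v) = t * p v.
  by move=> t0; rewrite p_scale rnormC ger0_norm.
pose G0 := [set wr | exists w (t : R), W w /\ wr = (w + t%:C *: y, t * e)].
have G0lin : linear_graph G0.
  split.
  - move=> _ _ _ _ [w1 [t1 [W1 [-> ->]]]] [w2 [t2 [W2 [-> ->]]]].
    exists (w1 + w2), (t1 + t2); split; first exact: WD.
    by rewrite complexD scalerDl mulrDl addrACA.
  - move=> _ _ t [w [u [Ww [-> ->]]]].
    exists (t%:C *: w), (t * u); split; first exact: WZ.
    by rewrite scalerDr scalerA -complexM mulrA.
have G0dom : dominated_graph p G0.
  move=> _ _ [w [t [Ww [-> ->]]]].
  have [t_le0|t_gt0] := leP t 0.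
    by apply: le_trans (seminorm_ge0 _); rewrite mulr_le0_ge0.
  have -> : w + t%:C *: y = t%:C *: (t^-1%:C *: w + y).
    by rewrite scalerDr scalerA -complexM mulfV ?gt_eqF // scale1r.
  by rewrite p_homog ?(ltW t_gt0) // ler_pM2l //; apply: W_far; exact: WZ.
have G00 : G0 (0, 0) by exists 0, 0; rewrite scale0r mul0r addr0.
have [f [fD fZ f_le f_G0]] := hahn_banach p_subadd p_homog G0lin G0dom G00.
have f_abs v : `|f v| <= p v.
  have fN : f (- v) = - f v by rewrite -mulN1r -fZ rmorphN1 scaleN1r.
  rewrite ler_norml f_le andbT lerNl -fN.
  by apply: le_trans (f_le _) _; rewrite seminormN.
have fW w : W w -> f w = 0.
  by move=> Ww; apply: f_G0; exists w, 0; rewrite scale0r mul0r addr0.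
exists (complexify f); split.
- exact: complexifyD.
- exact: complexifyZ.
- move=> v; apply: le_trans (rnorm_complexify f v) _.
  rewrite mulr_natl mulr2n lerD // -[p v]mul1r -rnorm_i -p_scale //.
- by move=> w Ww; rewrite /complexify !fW ?mulr0 ?subrr //; exact: WZ.
- rewrite Re_complexify; apply: f_G0; exists 0, 1.
  by rewrite scale1r mul1r add0r.
Qed.

End Separation.

(** * The dual bimodule *)

Section BoundedFunctionals.
Variable R : realType.
Local Notation K := R[i].

Lemma bounded_additive_continuous (X : normedModType K) (f : X -> K) (C : R) :
  (forall x y, f (x + y) = f x + f y) -> (forall x, rnorm (f x) <= C * rnorm x) ->
  continuous (f : X -> K^o).
Proof.
move=> fD fC x; apply/cvgrPdist_lt => _ /gt0_complexP[e e0 ->].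
have C1 : 0 < `|C| + 1 by rewrite ltr_wpDl.
apply/nbhs_normP; exists (e / (`|C| + 1))%:C => /=; first by rewrite ltcR divr_gt0.
move=> y; rewrite /= !rnormE ltcR ltr_pdivlMr // => lt_xy.
have -> : f x - f y = f (x - y) by apply/eqP; rewrite subr_eq -fD subrK.
rewrite ltcR; apply: le_lt_trans (fC _) _; rewrite mulrC; apply: le_lt_trans lt_xy.
by rewrite ler_wpM2l ?rnorm_ge0 // (le_trans (ler_norm C)) // lerDl.
Qed.

Variable X : completeNormedModType K.

Lemma dual_elem0 (f : X -> K) : dual_elem f -> f 0 = 0.
Proof. by case=> _ fZ _; rewrite -(scale0r (0 : X)) fZ mul0r. Qed.

Lemma dual_elem_bounded (f : X -> K) : dual_elem f ->
  exists2 C : R, 0 < C & forall x, rnorm (f x) <= C * rnorm x.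
Proof.
move=> fd; have [_ fZ fc] := fd.
move: (fc 0) => /cvgrPdist_lt /(_ 1 ltr01).
move=> /nbhs_norm0P[_ /gt0_complexP[d d0 ->] f_small].
exists (2 / d) => [|x]; first by rewrite divr_gt0.
have [->|x0] := eqVneq x 0; first by rewrite dual_elem0 // !rnorm0 mulr0.
have nx := rnorm_gt0 x0.
pose q := d / (2 * rnorm x); have q0 : 0 < q by rewrite divr_gt0 // mulr_gt0.
have := f_small (q%:C *: x); rewrite /= rnormE ltcR rnormZ rnormC gtr0_norm //.
have -> : q * rnorm x = d / 2 by rewrite /q; field; rewrite gt_eqF.
have half_lt : d / 2 < d by rewrite ltr_pdivrMr // ltr_pMr // ltr1n.
move=> /(_ half_lt).
rewrite dual_elem0 // sub0r rnormE rnormN fZ rnormM rnormC gtr0_norm //.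
rewrite -[1 : K]/((1 : R)%:C) ltcR => lt_fx.
have -> : rnorm (f x) = (2 / d * rnorm x) * (q * rnorm (f x)).
  by rewrite /q; field; rewrite !gt_eqF.
by rewrite ler_piMr ?(ltW lt_fx) // mulr_ge0 ?rnorm_ge0 // divr_ge0 ?ltW.
Qed.

Lemma bounded_dual_elem (f : X -> K) (C : R) :
  (forall x y, f (x + y) = f x + f y) -> (forall (k : K) x, f (k *: x) = k * f x) ->
  (forall x, rnorm (f x) <= C * rnorm x) -> dual_elem f.
Proof. by move=> fD fZ fC; split => //; exact: bounded_additive_continuous fC. Qed.

Lemma dual_elem_sum (f : X -> K) (I : Type) (r : seq I) (P : pred I) (F : I -> X) :
  dual_elem f -> f (\sum_(i <- r | P i) F i) = \sum_(i <- r | P i) f (F i).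
Proof.
by move=> fd; have [fD _ _] := fd; rewrite (big_morph f fD (dual_elem0 fd)).
Qed.

Definition opnorm (f : X -> K) : R :=
  sup [set rnorm (f x) | x in [set x : X | rnorm x <= 1]].

Section Opnorm.
Variables (f : X -> K) (fd : dual_elem f).

Lemma opnorm_has_sup : has_sup [set rnorm (f x) | x in [set x : X | rnorm x <= 1]].
Proof.
have [C C0 fC] := dual_elem_bounded fd; split.
  by exists (rnorm (f 0)), 0 => //=; rewrite rnorm0 ler01.
exists C => _ [x /= x1 <-]; apply: le_trans (fC x) _.
by rewrite ler_piMr // ltW.
Qed.

Lemma opnorm_ge0 : 0 <= opnorm f.
Proof.
apply: le_trans (rnorm_ge0 (f 0)) _.
apply: sup_upper_bound; first exact: opnorm_has_sup.
by exists 0 => //=; rewrite rnorm0 ler01.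
Qed.

Lemma ler_opnorm x : rnorm (f x) <= opnorm f * rnorm x.
Proof.
have [->|x0] := eqVneq x 0; first by rewrite dual_elem0 // !rnorm0 mulr0.
have nx := rnorm_gt0 x0.
have : rnorm (f ((rnorm x)^-1%:C *: x)) <= opnorm f.
  apply: sup_upper_bound; first exact: opnorm_has_sup.
  exists ((rnorm x)^-1%:C *: x) => //=.
  by rewrite rnormZ rnormC gtr0_norm ?invr_gt0 // mulVf ?gt_eqF.
have [_ fZ _] := fd; rewrite fZ rnormM rnormC gtr0_norm ?invr_gt0 //.
by rewrite mulrC -ler_pdivlMr ?invr_gt0 // invrK.
Qed.

Lemma opnorm_le (e : R) : 0 <= e -> (forall x, rnorm (f x) <= e * rnorm x) ->
  opnorm f <= e.
Proof.
move=> e0 fe; apply: ge_sup.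
  by exists (rnorm (f 0)), 0 => //=; rewrite rnorm0 ler01.
by move=> _ [x /= x1 <-]; apply: le_trans (fe x) _; rewrite ler_piMr.
Qed.

End Opnorm.
End BoundedFunctionals.

Section Composition.
Variable R : realType.
Local Notation K := R[i].
Variables (X : completeNormedModType K) (f : X -> K) (T : X -> X) (C : R).
Hypotheses (fd : dual_elem f) (C0 : 0 <= C).
Hypothesis TD : forall x y, T (x + y) = T x + T y.
Hypothesis TZ : forall (k : K) x, T (k *: x) = k *: T x.
Hypothesis T_bounded : forall x, rnorm (T x) <= C * rnorm x.

Let comp_bound x : rnorm (f (T x)) <= opnorm f * C * rnorm x.
Proof.
apply: le_trans (ler_opnorm fd _) _.
by rewrite -mulrA ler_wpM2l ?(opnorm_ge0 fd).
Qed.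

Lemma dual_elem_comp : dual_elem (f \o T).
Proof.
have [fD fZ _] := fd.
by apply: (bounded_dual_elem (C := opnorm f * C)) => [x y|k x|x] /=;
  rewrite ?TD ?fD ?TZ ?fZ ?comp_bound.
Qed.

Lemma opnorm_comp_le : opnorm (f \o T) <= opnorm f * C.
Proof. by apply: opnorm_le => //; rewrite mulr_ge0 ?opnorm_ge0. Qed.

End Composition.

Section DualSpace.
Variable R : realType.
Local Notation K := R[i].
Variable X : completeNormedModType K.

Definition dual_pred : {pred X -> K^o} := fun f => `[< dual_elem f >].

Lemma dual_subsemimod_closed : subsemimod_closed dual_pred.
Proof.
split; first split.
- apply/asboolP; apply: (@bounded_dual_elem _ _ (fun=> 0) 0) => [x y|k x|x].
  + by rewrite addr0.
  + by rewrite mulr0.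
  + by rewrite rnorm0 mul0r.
- move=> f g /asboolP fd /asboolP gd; apply/asboolP.
  have [[fD fZ _] [gD gZ _]] := (fd, gd).
  have [Cf _ fC] := dual_elem_bounded fd; have [Cg _ gC] := dual_elem_bounded gd.
  apply: (@bounded_dual_elem _ _ (fun x => f x + g x) (Cf + Cg)) => [x y|k x|x].
  + by rewrite fD gD addrACA.
  + by rewrite fZ gZ mulrDr.
  + by rewrite mulrDl; apply: le_trans (ler_rnormD _ _) (lerD (fC x) (gC x)).
- move=> k f /asboolP fd; apply/asboolP; have [fD fZ _] := fd.
  have [C _ fC] := dual_elem_bounded fd.
  apply: (@bounded_dual_elem _ _ (fun x => k * f x) (rnorm k * C)) => [x y|l x|x].
  + by rewrite fD mulrDr.
  + by rewrite fZ mulrCA.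
  + by rewrite rnormM -mulrA ler_wpM2l ?rnorm_ge0.
Qed.

HB.instance Definition _ :=
  GRing.isSubmodClosed.Build K (X -> K^o) dual_pred dual_subsemimod_closed.

Record dual := Dual { dual_fun :> X -> K^o; dual_funP : dual_fun \in dual_pred }.

HB.instance Definition _ := [isSub for dual_fun].
HB.instance Definition _ := [Choice of dual by <:].
HB.instance Definition _ := [SubChoice_isSubLmodule of dual by <:].

Lemma dual_elemP (f : dual) : dual_elem f.
Proof. exact/asboolP/dual_funP. Qed.

Definition to_dual (f : X -> K) (fd : dual_elem f) : dual := Dual (asboolT fd).

Lemma dual_ext (f g : dual) : (forall x, f x = g x) -> f = g.
Proof. by move=> fg; apply: val_inj; apply: funext. Qed.

Lemma dual_addE (f g : dual) x : (f + g) x = f x + g x. Proof. by []. Qed.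
Lemma dual_scaleE k (f : dual) x : (k *: f) x = k * f x. Proof. by []. Qed.
Lemma dual_sumE I (r : seq I) (P : pred I) (F : I -> dual) x :
  (\sum_(i <- r | P i) F i) x = \sum_(i <- r | P i) F i x.
Proof. by elim/big_rec2: _ => // i g h _ <-. Qed.

Definition dual_norm (f : dual) : K := (opnorm f)%:C.

Lemma dual_normD f g : dual_norm (f + g) <= dual_norm f + dual_norm g.
Proof.
rewrite /dual_norm -complexD lecR; apply: opnorm_le => [|x].
  exact: addr_ge0 (opnorm_ge0 (dual_elemP _)) (opnorm_ge0 (dual_elemP _)).
rewrite dual_addE mulrDl; apply: le_trans (ler_rnormD _ _) (lerD _ _).
all: exact/ler_opnorm/dual_elemP.
Qed.

Lemma opnormZ_le k (f : dual) : opnorm (k *: f : dual) <= rnorm k * opnorm f.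
Proof.
apply: opnorm_le => [|x].
  exact: mulr_ge0 (rnorm_ge0 _) (opnorm_ge0 (dual_elemP _)).
rewrite dual_scaleE rnormM -mulrA ler_wpM2l ?rnorm_ge0 //.
exact/ler_opnorm/dual_elemP.
Qed.

Lemma dual_normZ k f : dual_norm (k *: f) = `|k| * dual_norm f.
Proof.
rewrite /dual_norm rnormE -complexM; congr (_%:C); apply/eqP.
rewrite eq_le opnormZ_le /=.
have [->|k0] := eqVneq k 0.
  by rewrite rnorm0 mul0r; exact: opnorm_ge0 (dual_elemP (0 *: f)).
have := ler_wpM2l (rnorm_ge0 k) (opnormZ_le k^-1 (k *: f)).
by rewrite scalerA mulVf // scale1r mulrA -rnormM mulfV // rnorm1 mul1r.
Qed.

Lemma dual_norm0_eq0 f : dual_norm f = 0 -> f = 0.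
Proof.
move=> /complexI f0; apply: dual_ext => x; apply: rnorm0_eq0; apply/eqP.
by rewrite eq_le rnorm_ge0 andbT; have := ler_opnorm (dual_elemP f) x; rewrite f0 mul0r.
Qed.

HB.instance Definition _ :=
  Lmodule_isNormed.Build K dual dual_normD dual_normZ dual_norm0_eq0.

Lemma dual_normE (f : dual) : `|f| = (opnorm f)%:C. Proof. by []. Qed.

Lemma ler_dual_norm (f : dual) x : `|f x| <= `|f| * `|x|.
Proof. by rewrite dual_normE !rnormE -complexM lecR; exact/ler_opnorm/dual_elemP. Qed.

End DualSpace.

Section DualComplete.
Variable R : realType.
Local Notation K := R[i].
Variable X : completeNormedModType K.

Lemma cvg_dist_le T (F : set_system T) (FF : ProperFilter F) (u : T -> K^o)
    (l c : K^o) r :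
  u @ F --> l -> (\forall t \near F, rnorm (c - u t) <= r) -> rnorm (c - l) <= r.
Proof.
move=> ul near_le; apply/ler_addgt0Pr => e e0.
have ul_e := (cvgrPdist_lt _ _).1 ul e%:C ltac:(by rewrite ltcR).
near F => t.
have := ler_rnormD (c - u t) (u t - l); rewrite addrA subrK => /le_trans; apply.
apply: lerD; first by near: t.
rewrite rnorm_distC; apply: ltW; rewrite -ltcR -rnormE; near: t; exact: ul_e.
Unshelve. all: by end_near.
Qed.

Lemma dual_ball_le (f g : dual X) (r : R) x :
  ball f r%:C g -> rnorm (f x - g x) <= r * rnorm x.
Proof.
rewrite -ball_normE /= dual_normE ltcR => /ltW fg_r.
exact: le_trans (ler_opnorm (dual_elemP (f - g)) x) (ler_wpM2r (rnorm_ge0 x) fg_r).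
Qed.

Section CauchyFilter.
Variables (F : set_system (dual X)) (FF : ProperFilter F).
Hypothesis F_cauchy : cauchy F.

Let ev (x : X) (f : dual X) : K^o := f x.

Lemma cauchy_dual_pointwise_cvg x : cvg (ev x @ F).
Proof.
apply: complex_complete; apply/cauchyP => _ /gt0_complexP[e e0 ->].
have x1 : 0 < rnorm x + 1 by rewrite ltr_wpDl ?rnorm_ge0.
have /(cauchyP _).1 : cauchy F := F_cauchy.
move=> /(_ (e / (rnorm x + 1))%:C) [|g Fg]; first by rewrite ltcR divr_gt0.
exists (g x); apply: (@filterS _ F _ (ball g (e / (rnorm x + 1))%:C)) Fg.
move=> f /(dual_ball_le x) gf; rewrite -ball_normE /= rnormE ltcR.
apply: le_lt_trans gf _.
by rewrite mulrAC ltr_pdivrMr // ltr_pM2l // ltrDl.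
Qed.

Let L x := lim (ev x @ F).

Lemma dual_ball_lim_le (g : dual X) (r : R) x :
  F (ball g r%:C) -> rnorm (g x - L x) <= r * rnorm x.
Proof.
move=> Fg; apply: (cvg_dist_le _ (@cauchy_dual_pointwise_cvg x)).
by apply: (@filterS _ F _ (ball g r%:C)) Fg => f /dual_ball_le; apply.
Qed.

Lemma cauchy_dual_lim_elem : dual_elem L.
Proof.
have Lx x := @cauchy_dual_pointwise_cvg x.
have [g Fg] := (cauchyP _).1 F_cauchy 1 ltr01.
apply: (@bounded_dual_elem _ _ L (opnorm g + 1)) => [x y|k x|x].
- rewrite /L; have -> : ev (x + y) = ev x + ev y.
    by apply: funext => f; have [fD _ _] := dual_elemP f; exact: fD.
  by apply: (cvg_lim _ (cvgD (Lx x) (Lx y))); exact: norm_hausdorff.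
- rewrite /L; have -> : ev (k *: x) = k \*: ev x.
    by apply: funext => f; have [_ fZ _] := dual_elemP f; exact: fZ.
  by apply: (cvg_lim _ (cvgZl_tmp (Lx x))); exact: norm_hausdorff.
- have := ler_rnormD (g x) (L x - g x); rewrite addrC subrK => /le_trans; apply.
  rewrite mulrDl mul1r lerD ?(ler_opnorm (dual_elemP g)) // rnorm_distC.
  by rewrite -[1]/((1 : R)%:C) in Fg; rewrite -[rnorm x]mul1r; exact: dual_ball_lim_le.
Qed.

Lemma cauchy_dual_cvg : cvg F.
Proof.
apply/cvg_ex; exists (to_dual cauchy_dual_lim_elem).
apply/cvgrPdist_le => _ /gt0_complexP[e e0 ->].
have e2 : 0 < e / 2 by rewrite divr_gt0.
have [h Fh] := (cauchyP _).1 F_cauchy (e / 2)%:C ltac:(by rewrite ltcR).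
apply: (@filterS _ F _ (ball h (e / 2)%:C)) (Fh) => f hf.
rewrite dual_normE lecR; apply: opnorm_le => [|x]; first exact: ltW.
have := ler_rnormD (L x - h x) (h x - f x); rewrite addrA subrK => /le_trans; apply.
rewrite [e]splitr mulrDl; apply: lerD; last exact: dual_ball_le.
by rewrite rnorm_distC; exact: dual_ball_lim_le Fh.
Qed.

End CauchyFilter.

HB.instance Definition _ := Uniform_isComplete.Build (dual X)
  (fun F FF F_cauchy => @cauchy_dual_cvg F FF F_cauchy).

End DualComplete.

Section DualBimodule.
Variable R : realType.
Local Notation K := R[i].
Variables (A : completeNormedModType K) (BA : banach_algebra A).
Variables (X : completeNormedModType K) (M : banach_bimodule BA X).

Lemma lact0 a : lact M a 0 = 0.
Proof. by have := lactZr M 0 a 0; rewrite !scale0r. Qed.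

Lemma ract0 a : ract M 0 a = 0.
Proof. by have := ractZl M 0 0 a; rewrite !scale0r. Qed.

Lemma lactN a x : lact M a (- x) = - lact M a x.
Proof. by rewrite -scaleN1r lactZr scaleN1r. Qed.

Lemma ractN x a : ract M (- x) a = - ract M x a.
Proof. by rewrite -scaleN1r ractZl scaleN1r. Qed.

Lemma rnorm_bilinear_bound {U V W : normedZmodType K} (u : U) (v : V) (w : W) (C : K) :
  `|w| <= C * `|u| * `|v| -> rnorm w <= rnorm C * rnorm u * rnorm v.
Proof.
move=> w_le; have /ger0_norm CE : 0 <= C * `|u| * `|v| := le_trans (normr_ge0 w) w_le.
by rewrite -lecR !complexM -!rnormE; rewrite -CE !normrM !normr_id in w_le.
Qed.

Lemma lact_rbounded :
  exists2 C : R, 0 <= C & forall a x, rnorm (lact M a x) <= C * rnorm a * rnorm x.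
Proof.
have [C C_bound] := lact_bounded M; exists (rnorm C); first exact: rnorm_ge0.
by move=> a x; apply: rnorm_bilinear_bound.
Qed.

Lemma ract_rbounded :
  exists2 C : R, 0 <= C & forall x a, rnorm (ract M x a) <= C * rnorm x * rnorm a.
Proof.
have [C C_bound] := ract_bounded M; exists (rnorm C); first exact: rnorm_ge0.
by move=> x a; apply: rnorm_bilinear_bound.
Qed.

Lemma dual_lact_elem a (f : dual X) : dual_elem (fun x => f (ract M x a)).
Proof.
have [C C0 C_bound] := ract_rbounded.
apply: (dual_elem_comp (C := C * rnorm a)) (dual_elemP f) _ _ _ => [x y|k x|x].
- exact: ractDl.
- exact: ractZl.
- by rewrite mulrAC C_bound.
Qed.

Lemma dual_ract_elem (f : dual X) a : dual_elem (fun x => f (lact M a x)).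
Proof.
have [C C0 C_bound] := lact_rbounded.
apply: (dual_elem_comp (C := C * rnorm a)) (dual_elemP f) _ _ _ => [x y|k x|x].
- exact: lactDr.
- exact: lactZr.
- exact: C_bound.
Qed.

Definition dual_lact a (f : dual X) : dual X := to_dual (dual_lact_elem a f).
Definition dual_ract (f : dual X) a : dual X := to_dual (dual_ract_elem f a).

Lemma dual_lact_bounded :
  exists C : K, forall a f, `|dual_lact a f| <= C * `|a| * `|f|.
Proof.
have [C C0 C_bound] := ract_rbounded; exists C%:C => a f.
rewrite dual_normE !rnormE -!complexM lecR [X in _ <= X]mulrC.
apply: (opnorm_comp_le (T := fun x => ract M x a) (dual_elemP f)) => [|x].
  exact: mulr_ge0 C0 (rnorm_ge0 a).
by rewrite mulrAC C_bound.
Qed.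

Lemma dual_ract_bounded :
  exists C : K, forall f a, `|dual_ract f a| <= C * `|f| * `|a|.
Proof.
have [C C0 C_bound] := lact_rbounded; exists C%:C => f a.
rewrite dual_normE !rnormE -!complexM lecR (mulrC C) -mulrA.
apply: (opnorm_comp_le (T := lact M a) (dual_elemP f)) => [|x].
  exact: mulr_ge0 C0 (rnorm_ge0 a).
exact: C_bound.
Qed.

Definition dual_bimodule : banach_bimodule BA (dual X).
Proof.
refine (@BanachBimodule R A BA (dual X) dual_lact dual_ract
  _ _ _ _ _ _ _ _ _ _ _ dual_lact_bounded dual_ract_bounded).
- move=> a b f; apply: dual_ext => x /=.
  by have [fD _ _] := dual_elemP f; rewrite ractDr fD.
- by move=> a f g; apply: dual_ext.
- move=> k a f; apply: dual_ext => x /=.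
  by have [_ fZ _] := dual_elemP f; rewrite ractZr fZ.
- by move=> k a f; apply: dual_ext.
- by move=> f g a; apply: dual_ext.
- move=> f a b; apply: dual_ext => x /=.
  by have [fD _ _] := dual_elemP f; rewrite lactDl fD.
- by move=> k f a; apply: dual_ext.
- move=> k f a; apply: dual_ext => x /=.
  by have [_ fZ _] := dual_elemP f; rewrite lactZl fZ.
- by move=> a b f; apply: dual_ext => x /=; rewrite ractA.
- by move=> f a b; apply: dual_ext => x /=; rewrite lactA.
- by move=> a f b; apply: dual_ext => x /=; rewrite lractA.
Defined.

End DualBimodule.

Lemma directed_eventually_forall (I : Type) (le : I -> I -> Prop) (T : finType)
    (P : T -> I -> Prop) : directed_set le ->
  (forall t, exists i0, forall i, le i0 i -> P t i) ->
  exists i0, forall i, le i0 i -> forall t, P t i.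
Proof.
move=> [[i00] _ le_trans le_ub] evP.
suff [i0 Pi0] : exists i0, forall i, le i0 i -> forall t, t \in enum T -> P t i.
  by exists i0 => i /Pi0 Pi t; apply: Pi; rewrite mem_enum.
elim: (enum T) => [|t s [i1 Pi1]]; first by exists i00.
have [i2 Pi2] := evP t; have [i3 [le13 le23]] := le_ub i1 i2.
exists i3 => i le3i u; rewrite in_cons => /predU1P[->|us].
- exact/Pi2/(le_trans _ _ _ le23).
- exact: Pi1 (le_trans _ _ _ le13 le3i) _ us.
Qed.

(** * Approximation from weak* approximation *)

Section CoordinateFunctionals.
Variable R : realType.
Local Notation K := R[i].
Variables (X : completeNormedModType K) (n : nat).

Definition sum_rnorm (v : 'I_n -> X) : R := \sum_k rnorm (v k).

Lemma sum_rnormD u v : sum_rnorm (u + v) <= sum_rnorm u + sum_rnorm v.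
Proof. by rewrite -big_split; apply: ler_sum => k _; exact: ler_rnormD. Qed.

Lemma sum_rnormZ (c : K) v : sum_rnorm (c *: v) = rnorm c * sum_rnorm v.
Proof. by rewrite mulr_sumr; apply: eq_bigr => k _; rewrite -rnormZ. Qed.

Lemma ler_rnorm_sum_rnorm v k : rnorm (v k) <= sum_rnorm v.
Proof.
by rewrite /sum_rnorm (bigD1 k) //= lerDl; apply: sumr_ge0 => j _; exact: rnorm_ge0.
Qed.

Definition inj_coord k (x : X) : 'I_n -> X := fun j => if k == j then x else 0.

Lemma sum_inj_coord v : \sum_k inj_coord k (v k) = v.
Proof. by apply/funext => j; rewrite fct_sumE /inj_coord -big_mkcond big_pred1_eq. Qed.

Variable g : ('I_n -> X) -> K.
Hypothesis gD : forall u v, g (u + v) = g u + g v.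
Hypothesis gZ : forall (c : K) v, g (c *: v) = c * g v.

Lemma sum_coord v : \sum_k g (inj_coord k (v k)) = g v.
Proof.
have g0 : g 0 = 0 by rewrite -[0](scale0r 0) gZ mul0r.
by rewrite -[in RHS](sum_inj_coord v) (big_morph g gD g0).
Qed.

Lemma dual_elem_coord (C : R) k : (forall v, rnorm (g v) <= C * sum_rnorm v) ->
  dual_elem (fun x => g (inj_coord k x)).
Proof.
move=> g_bounded; apply: (bounded_dual_elem (C := C)) => [x1 x2|c x|x].
- rewrite -gD; congr g; apply/funext => j; rewrite /inj_coord fctE.
  by case: eqP; rewrite ?addr0.
- rewrite -gZ; congr g; apply/funext => j; rewrite /inj_coord fctE.
  by case: eqP; rewrite ?scaler0.
- apply: le_trans (g_bounded _) _; rewrite /sum_rnorm (bigD1 k) //= /inj_coord eqxx.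
  by rewrite big1 ?addr0 // => j jk; rewrite eq_sym (negbTE jk) rnorm0.
Qed.

End CoordinateFunctionals.

Section WeakStarToContractible.
Variable R : realType.
Local Notation K := R[i].
Variables (A : completeNormedModType K) (BA : banach_algebra A).
Variables (X : completeNormedModType K) (M : banach_bimodule BA X) (D : A -> X).

(* D as a derivation into X^**, through the canonical embedding of X. *)
Definition bidual_lift (a : A) (phi : dual X) : K := phi (D a).

Lemma bidual_lift_derivation :
  derivation M D -> dual_derivation (dual_bimodule M) bidual_lift.
Proof.
move=> [DD DZ DL]; split => [a|a b phi|k a phi|a b phi]; rewrite /bidual_lift.
- apply: (@bounded_dual_elem _ _ _ (rnorm (D a))) => // phi.
  by rewrite mulrC; exact: ler_opnorm (dual_elemP phi) _.
- by have [phiD _ _] := dual_elemP phi; rewrite DD phiD.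
- by have [_ phiZ _] := dual_elemP phi; rewrite DZ phiZ.
- by have [phiD _ _] := dual_elemP phi; rewrite DL phiD.
Qed.

Lemma bidual_lift_continuous : continuous D -> dual_continuous bidual_lift.
Proof.
move=> Dcont a _ /gt0_complexP[e e0 ->].
move: (Dcont a) => /cvgrPdist_lt /(_ e%:C) /(_ ltac:(by rewrite ltcR)).
move=> /nbhs_normP[d /= d0 Dd]; exists d => // b ab_d phi.
rewrite /bidual_lift; have [phiD phiZ _] := dual_elemP phi.
have -> : phi (D b) - phi (D a) = - phi (D a - D b).
  by rewrite phiD -[- D b]scaleN1r phiZ mulN1r opprD opprK addrC.
have Dab : `|D a - D b| < e%:C by apply: Dd; rewrite /ball_ /= distrC.
rewrite normrN; apply: le_trans (ler_dual_norm phi _) _.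
by rewrite mulrC ler_wpM2r ?normr_ge0 // ltW.
Qed.

Section Vanishing.
Hypothesis D_wstar : dual_wstar_approx_semi_inner (dual_bimodule M) bidual_lift.

(* Along the weak* net, the contributions of a_k.F_i and G_i.a_k to the sum
   over k are F_i and G_i applied to the vanishing sums. *)
Lemma wstar_approx_sum_eq0 n (a : 'I_n -> A) (phi : 'I_n -> dual X) :
  \sum_k dual_ract M (phi k) (a k) = 0 -> \sum_k dual_lact M (a k) (phi k) = 0 ->
  \sum_k phi k (D (a k)) = 0.
Proof.
move=> ract_eq0 lact_eq0; have [I [le [F [G [dI FG FG_cvg]]]]] := D_wstar.
pose err i k := F i (dual_ract M (phi k) (a k)) - G i (dual_lact M (a k) (phi k))
  - phi k (D (a k)).
have sum_err i : \sum_k err i k = - \sum_k phi k (D (a k)).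
  have [Fd Gd] := FG i.
  rewrite !sumrB -!dual_elem_sum // ract_eq0 lact_eq0 !dual_elem0 //.
  by rewrite subrr sub0r.
apply: rnorm0_eq0; apply/eqP; rewrite eq_le rnorm_ge0 andbT.
apply/ler_addgt0Pr => e e0; rewrite add0r.
have n1 : 0 < n%:R + 1 :> R by rewrite ltr_wpDl.
have e'0 : 0 < (e / (n%:R + 1))%:C :> K by rewrite ltcR divr_gt0.
have [i0 Hi0] := directed_eventually_forall dI (fun k => FG_cvg (a k) (phi k) _ e'0).
have [_ le_refl _ _] := dI.
rewrite -rnormN -(sum_err i0); apply: le_trans (ler_rnorm_sum _ _ _) _.
apply: le_trans (_ : \sum_(k < n) e / (n%:R + 1) <= e).
  by apply: ler_sum => k _; apply/ltW; rewrite -ltcR -rnormE; exact: Hi0.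
rewrite sumr_const card_ord -[_ *+ n]mulr_natl mulrA ler_pdivrMr //.
by rewrite mulrC ler_pM2l // lerDl.
Qed.

End Vanishing.

Section FiniteApproximation.
Hypothesis D_vanish : forall n (a : 'I_n -> A) (phi : 'I_n -> dual X),
  \sum_k dual_ract M (phi k) (a k) = 0 -> \sum_k dual_lact M (a k) (phi k) = 0 ->
  \sum_k phi k (D (a k)) = 0.

Lemma finite_approx (s : seq A) (e : R) : 0 < e ->
  exists xi eta, forall a, a \in s -> rnorm (lact M a xi - ract M eta a - D a) < e.
Proof.
(* Otherwise the tuple y = (D a_k)_k is at l1-distance at least e from the
   inner tuples; a separating functional yields phi_k contradicting
   [D_vanish]. *)
move=> e0; apply: contrapT => no_approx.
pose n := size s; pose a (k : 'I_n) := s`_k.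
pose inner xi eta : 'I_n -> X := fun k => lact M (a k) xi - ract M eta (a k).
pose W := [set w | exists xi eta, w = inner xi eta].
pose y : 'I_n -> X := fun k => D (a k).
have W0 : W 0 by exists 0, 0; apply/funext => k; rewrite /inner lact0 ract0 subrr.
have WD u v : W u -> W v -> W (u + v).
  move=> [x1 [e1 ->]] [x2 [e2 ->]]; exists (x1 + x2), (e1 + e2); apply/funext => k.
  by rewrite /inner /= lactDr ractDl opprD addrACA.
have WZ c u : W u -> W (c *: u).
  move=> [xi [eta ->]]; exists (c *: xi), (c *: eta); apply/funext => k.
  by rewrite /inner /= lactZr ractZl scalerBr.
have W_far w : W w -> e <= sum_rnorm (w + y).
  move=> [xi [eta ->]]; rewrite leNgt; apply/negP => small; apply: no_approx.
  exists (- xi), (- eta) => _ /(nthP 0)[k ks <-].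
  have -> : lact M s`_k (- xi) - ract M (- eta) s`_k - D s`_k =
            - (inner xi eta + y) (Ordinal ks).
    by rewrite lactN ractN opprK /= opprD opprB [- _ + _]addrC.
  by rewrite rnormN; apply: le_lt_trans (ler_rnorm_sum_rnorm _ _) small.
have [g [gD gZ g_bound gW gy]] :=
  seminorm_separation (@sum_rnormD _ X n) (@sum_rnormZ _ X n) (ltW e0) W0 WD WZ W_far.
pose phi k : dual X := to_dual (dual_elem_coord gD gZ k g_bound).
have : \sum_k phi k (D (a k)) = 0.
  apply: D_vanish; apply: dual_ext => x; rewrite dual_sumE /= sum_coord // gW //.
  - by exists x, 0; apply/funext => k; rewrite /inner ract0 subr0.
  - by exists 0, (- x); apply/funext => k; rewrite /inner lact0 ractN sub0r opprK.
by rewrite sum_coord // => gy0; move: e0; rewrite -gy gy0 /= ltxx.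
Qed.

End FiniteApproximation.

Lemma approx_semi_inner_of_finite :
  (forall (s : seq A) (e : R), 0 < e -> exists xi eta,
     forall a, a \in s -> rnorm (lact M a xi - ract M eta a - D a) < e) ->
  approx_semi_inner M D.
Proof.
(* The net is indexed by finite subsets of A and precisions 1 / (N + 1). *)
move=> approx.
pose leJ (j1 j2 : seq A * nat) := {subset j1.1 <= j2.1} /\ (j1.2 <= j2.2)%N.
have approx_j (j : seq A * nat) : exists xe : X * X, forall a, a \in j.1 ->
    rnorm (lact M a xe.1 - ract M xe.2 a - D a) < j.2.+1%:R^-1.
  have [xi [eta approx_s]] := approx j.1 j.2.+1%:R^-1 ltac:(by rewrite invr_gt0).
  by exists (xi, eta).
have [xe xeP] := choice approx_j.
exists (seq A * nat)%type, leJ, (fun j => (xe j).1), (fun j => (xe j).2); split.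
  split=> [|j|j1 j2 j3 [s12 N12] [s23 N23]|j1 j2].
  - exact: inhabits ([::], 0%N).
  - by split.
  - by split=> [a /s12 /s23 //|]; exact: leq_trans N23.
  - exists (j1.1 ++ j2.1, maxn j1.2 j2.2); split; split=> /=.
    + by move=> a a_j1; rewrite mem_cat a_j1.
    + exact: leq_maxl.
    + by move=> a a_j2; rewrite mem_cat a_j2 orbT.
    + exact: leq_maxr.
move=> a _ /gt0_complexP[e e0 ->].
pose N := Num.truncn e^-1.
have N_lt : N.+1%:R^-1 < e.
  by rewrite -[e]invrK ltf_pV2 ?posrE ?ltr0n ?invr_gt0 // Num.Theory.truncnS_gt.
exists ([:: a], N) => j [s_j N_j]; rewrite rnormE ltcR.
apply: lt_trans (xeP j a (s_j _ (mem_head _ _))) (le_lt_trans _ N_lt).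
by rewrite lef_pV2 ?posrE ?ltr0n // ler_nat ltnS.
Qed.

End WeakStarToContractible.

Section Implications.
Variable R : realType.
Local Notation K := R[i].
Variables (A : completeNormedModType K) (BA : banach_algebra A).

Lemma approx_semi_amenable_wstar :
  approx_semi_amenable BA -> wstar_approx_semi_amenable BA.
Proof.
move=> amenable X M D Dder Dcont.
have [I [le [f [g [dI fg f_g_cvg]]]]] := amenable X M D Dder Dcont.
exists I, le, f, g; split => // a x _ /gt0_complexP[e e0 ->].
have x1 : 0 < rnorm x + 1 by rewrite ltr_wpDl ?rnorm_ge0.
have [i0 Hi0] := f_g_cvg a (e / (rnorm x + 1))%:C ltac:(by rewrite ltcR divr_gt0).
exists i0 => i /Hi0 /(_ x); rewrite !rnormE -complexM lecR ltcR => /le_lt_trans; apply.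
by rewrite mulrAC ltr_pdivrMr // ltr_pM2l // ltrDl.
Qed.

Lemma approx_semi_contractible_amenable :
  approx_semi_contractible BA -> approx_semi_amenable BA.
Proof.
move=> contractible X M D [Delem DD DZ DL] Dcont.
pose D' a : dual X := to_dual (Delem a).
have D'der : derivation (dual_bimodule M) D'.
  by split=> [a b|k a|a b]; apply: dual_ext => x /=;
    [exact: DD | exact: DZ | exact: DL].
have D'cont : continuous D'.
  move=> a; apply/cvgrPdist_lt => _ /gt0_complexP[e e0 ->].
  have e2 : 0 < e / 2 by rewrite divr_gt0.
  have [d d0 Dd] := Dcont a (e / 2)%:C ltac:(by rewrite ltcR).
  apply/nbhs_normP; exists d => // b /= ab_d.
  rewrite dual_normE ltcR; apply: le_lt_trans (_ : e / 2 < e); last first.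
    by rewrite ltr_pdivrMr // ltr_pMr // ltr1n.
  apply: opnorm_le => [|x]; first exact: ltW.
  rewrite distrC in ab_d; move: (Dd b ab_d x) => /=.
  by rewrite rnorm_distC !rnormE -complexM lecR.
have [I [le [xi [eta [dI xi_eta_cvg]]]]] := contractible _ _ _ D'der D'cont.
exists I, le, (fun i => xi i : X -> K), (fun i => eta i : X -> K); split => //.
  by move=> i; split; exact: dual_elemP.
move=> a e e0; have [i0 Hi0] := xi_eta_cvg a e e0; exists i0 => i /Hi0 /ltW lt_e x.
exact: le_trans (ler_dual_norm _ x) (ler_wpM2r (normr_ge0 x) lt_e).
Qed.

Lemma wstar_approx_semi_amenable_contractible :
  wstar_approx_semi_amenable BA -> approx_semi_contractible BA.
Proof.
move=> wstar X M D Dder Dcont; apply: approx_semi_inner_of_finite => s e.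
apply: finite_approx => n a phi.
apply: wstar_approx_sum_eq0.
exact: wstar _ _ _ (bidual_lift_derivation Dder) (bidual_lift_continuous Dcont).
Qed.

End Implications.

Theorem theorem2p11 (R : realType) (A : completeNormedModType (R[i]))
    (BA : banach_algebra A) :
  (approx_semi_contractible BA <-> approx_semi_amenable BA) /\
  (approx_semi_amenable BA <-> wstar_approx_semi_amenable BA).
Proof.
have i_ii := @approx_semi_contractible_amenable R A BA.
have ii_iii := @approx_semi_amenable_wstar R A BA.
have iii_i := @wstar_approx_semi_amenable_contractible R A BA.
split; split.
- exact: i_ii.
- by move=> /ii_iii /iii_i.
- exact: ii_iii.
- by move=> /iii_i /i_ii.
Qed.
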